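(* For every integer $n>0$, $\pi_1(\mathcal{M}(1,n))$ admits a nontrivial representation into $SL_2(\mathbb{R})$, and hence (since $\mathcal{M}(1,n)$ is an integral homology sphere) a nontrivial representation into $\widetilde{PSL_2(\mathbb{R})}$.
   Context: $\mathcal{M}$ is the SnapPy census manifold $m137$ with $\pi_1(\mathcal{M})=\langle \lambda,\beta \mid \beta^{-1}\lambda^{-1}\beta^{-1}\lambda^{-1}\beta^{2}\lambda=\lambda\beta^{-2}\lambda^{-1}\beta^{2}\rangle$, where $\lambda$ is the homological longitude and $\mu=\beta^2\lambda^{-1}\beta^{-3}\lambda^{-1}\beta^2$ is a meridian. $\mathcal{M}(1,n)$ is the Dehn filling along $\mu+n\lambda$, with $\pi_1(\mathcal{M}(1,n))=\pi_1(\mathcal{M})/\langle\langle\mu\lambda^n\rangle\rangle$. $\widetilde{PSL_2(\mathbb{R})}$ is the universal cover of $PSL_2(\mathbb{R})$. *)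

From Stdlib Require Import Reals.
Open Scope R_scope.

Fixpoint gpow {G : Type} (mul : G -> G -> G) (one : G) (x : G) (n : nat) : G :=
  match n with
  | O => one
  | S k => mul x (gpow mul one x k)
  end.

(* [m137_filling_rel eqG mul inv one n l b] says that the assignment
   lambda |-> l, beta |-> b satisfies the defining relations of
   pi_1(M(1,n)) = < lambda, beta |
      beta^-1 lambda^-1 beta^-1 lambda^-1 beta^2 lambda = lambda beta^-2 lambda^-1 beta^2,
      mu lambda^n = 1 >,
   mu = beta^2 lambda^-1 beta^-3 lambda^-1 beta^2,
   in a group given by (mul, inv, one), with equality eqG.
   By the universal property of presentations, such (l,b) are exactly the
   homomorphisms pi_1(M(1,n)) -> G. *)
Definition m137_filling_rel {G : Type} (eqG : G -> G -> Prop)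
  (mul : G -> G -> G) (inv : G -> G) (one : G) (n : nat) (l b : G) : Prop :=
  let b2 := mul b b in
  let mu := mul b2 (mul (inv l) (mul (inv b) (mul (inv b) (mul (inv b)
              (mul (inv l) b2))))) in
  eqG (mul (inv b) (mul (inv l) (mul (inv b) (mul (inv l) (mul b2 l)))))
      (mul l (mul (inv b2) (mul (inv l) b2)))
  /\ eqG (mul mu (gpow mul one l n)) one.

Record Mat2 := mkMat2 { m11 : R; m12 : R; m21 : R; m22 : R }.

Definition mdet (A : Mat2) : R := m11 A * m22 A - m12 A * m21 A.

Definition mmul (A B : Mat2) : Mat2 :=
  mkMat2 (m11 A * m11 B + m12 A * m21 B) (m11 A * m12 B + m12 A * m22 B)
         (m21 A * m11 B + m22 A * m21 B) (m21 A * m12 B + m22 A * m22 B).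

(* inverse of a determinant-one matrix (the adjugate) *)
Definition minv (A : Mat2) : Mat2 :=
  mkMat2 (m22 A) (- m12 A) (- m21 A) (m11 A).

Definition mone : Mat2 := mkMat2 1 0 0 1.

Definition in_SL2R (A : Mat2) : Prop := mdet A = 1.

(* ---------- Universal cover of PSL_2(R) ----------
   Model: the group (under composition) of lifts to R of the action of
   SL_2(R) on the circle of rays S^1 = {(cos t, sin t)}: continuous maps
   f : R -> R such that for some A in SL_2(R), A (cos t, sin t) is a positive
   multiple of (cos (f t), sin (f t)) for all t.  This group is the universal
   cover of SL_2(R), which is also the universal cover of PSL_2(R). *)

Definition is_PSL2R_lift (f : R -> R) : Prop :=
  continuity f /\
  exists a b c d : R, a * d - b * c = 1 /\
    forall t : R, exists r : R, r > 0 /\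
      a * cos t + b * sin t = r * cos (f t) /\
      c * cos t + d * sin t = r * sin (f t).

(* An element is represented by a pair (f, f^-1). *)
Definition Lift := ((R -> R) * (R -> R))%type.

Definition is_lift_elt (p : Lift) : Prop :=
  is_PSL2R_lift (fst p) /\
  (forall x, fst p (snd p x) = x) /\ (forall x, snd p (fst p x) = x).

Definition lift_mul (p q : Lift) : Lift :=
  (fun x => fst p (fst q x), fun x => snd q (snd p x)).
Definition lift_inv (p : Lift) : Lift := (snd p, fst p).
Definition lift_one : Lift := (fun x => x, fun x => x).
Definition lift_eq (p q : Lift) : Prop := forall x, fst p x = fst q x.

(* On the curve [(z^3 - 1)(w^4 - z) + (z^2 + 1)^2 w^2 = 0] the matrices
   [lambda = diag (z, 1/z)] and [beta = [[w, 1], [-(z^2 + z + 1), z/w]] / (z + 1)] satisfy the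
   first relation, and the meridian becomes diagonal with entry [g(z, w)].  For [z > 1] the
   curve has a positive branch [w(z)], so the filling relation reduces to [g(z, w(z)) z^n = 1],
   which the intermediate value theorem solves on [[1, 2]].

   Every element of SL_2(R) lifts to a homeomorphism of R commuting with the translation by
   [2 PI], and lifts of the two sides of a relation differ by a central deck translation.
   As M(1,n) is a homology sphere, the exponent sums of the relators form a unimodular matrix,
   so re-choosing the lifts of the generators absorbs both translations. *)

From Stdlib Require Import Reals Lra Lia ZArith.
From Coquelicot Require Import Coquelicot.
Open Scope R_scope.

Lemma Mat2_eq a b c d a' b' c' d' :
  a = a' -> b = b' -> c = c' -> d = d' -> mkMat2 a b c d = mkMat2 a' b' c' d'.
Proof. intros; subst; reflexivity. Qed.

Lemma mdet_mmul A B : mdet (mmul A B) = mdet A * mdet B.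
Proof. destruct A, B; unfold mdet; simpl; ring. Qed.

Lemma mdet_minv A : mdet (minv A) = mdet A.
Proof. destruct A; unfold mdet; simpl; ring. Qed.

Lemma minv_mmul A B : minv (mmul A B) = mmul (minv B) (minv A).
Proof. destruct A, B; apply Mat2_eq; simpl; ring. Qed.

Lemma minv_minv A : minv (minv A) = A.
Proof. destruct A; apply Mat2_eq; simpl; ring. Qed.

Lemma minv_mone : minv mone = mone.
Proof. apply Mat2_eq; simpl; ring. Qed.

Lemma mmul_mone_r A : mmul A mone = A.
Proof. destruct A; apply Mat2_eq; simpl; ring. Qed.

Lemma mmul_mone_l A : mmul mone A = A.
Proof. destruct A; apply Mat2_eq; simpl; ring. Qed.

Definition relator1_lhs {G} (mul : G -> G -> G) (inv : G -> G) (l b : G) : G :=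
  mul (inv b) (mul (inv l) (mul (inv b) (mul (inv l) (mul (mul b b) l)))).
Definition relator1_rhs {G} (mul : G -> G -> G) (inv : G -> G) (l b : G) : G :=
  mul l (mul (inv (mul b b)) (mul (inv l) (mul b b))).
Definition meridian {G} (mul : G -> G -> G) (inv : G -> G) (l b : G) : G :=
  mul (mul b b) (mul (inv l) (mul (inv b) (mul (inv b) (mul (inv b)
    (mul (inv l) (mul b b)))))).

Lemma m137_filling_rel_iff {G} (eqG : G -> G -> Prop) mul inv one n (l b : G) :
  m137_filling_rel eqG mul inv one n l b <->
  eqG (relator1_lhs mul inv l b) (relator1_rhs mul inv l b) /\
  eqG (mul (meridian mul inv l b) (gpow mul one l n)) one.
Proof. reflexivity. Qed.

(** * An explicit representation into SL_2(R) *)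

Definition Lmat (z : R) : Mat2 := mkMat2 z 0 0 (/ z).
Definition Bmat (z w : R) : Mat2 :=
  mkMat2 (w / (z + 1)) (/ (z + 1)) (- (z ^ 2 + z + 1) / (z + 1)) (z / (w * (z + 1))).

Definition curve (z w : R) : R := (z ^ 3 - 1) * (w ^ 4 - z) + (z ^ 2 + 1) ^ 2 * w ^ 2.

Definition meridian_entry (z w : R) : R :=
  w * (1 + z ^ 2 + z ^ 4 + (z - 1) * (z ^ 2 + 1) * w ^ 2) / z ^ 2.

Lemma mdet_Lmat z : z <> 0 -> mdet (Lmat z) = 1.
Proof. intro; unfold mdet; simpl; field; auto. Qed.

Lemma mdet_Bmat z w : 0 < z -> 0 < w -> mdet (Bmat z w) = 1.
Proof. intros; unfold mdet; simpl; field; lra. Qed.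

Section OnTheCurve.

Variables z w : R.
Hypotheses (z_gt1 : 1 < z) (w_gt0 : 0 < w) (on_curve : curve z w = 0).

(* Each entry of the difference is an explicit rational multiple of [curve z w]. *)
Ltac cofactor c :=
  cbv [relator1_lhs relator1_rhs meridian meridian_entry Lmat Bmat mmul minv m11 m12 m21 m22];
  apply Rminus_diag_uniq; transitivity (c * curve z w);
  [unfold curve; field; repeat split; lra | rewrite on_curve; ring].

Lemma relator1_Lmat_Bmat :
  relator1_lhs mmul minv (Lmat z) (Bmat z w) = relator1_rhs mmul minv (Lmat z) (Bmat z w).
Proof.
  apply Mat2_eq.
  - cofactor ((z - 1) / (w ^ 2 * (z + 1) ^ 3)).
  - cofactor (- (z - 1) / (z * w ^ 3 * (z + 1) ^ 3)).
  - cofactor (- (z ^ 3 - 1) / (z ^ 2 * w * (z + 1) ^ 3)).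
  - cofactor (- (z - 1) / (z ^ 2 * w ^ 2 * (z + 1) ^ 3)).
Qed.

Lemma meridian_Lmat_Bmat :
  m11 (meridian mmul minv (Lmat z) (Bmat z w)) = meridian_entry z w /\
  m12 (meridian mmul minv (Lmat z) (Bmat z w)) = 0 /\
  m21 (meridian mmul minv (Lmat z) (Bmat z w)) = 0.
Proof.
  split; [|split].
  - cofactor ((z ^ 2 * (1 - z ^ 3) - (z ^ 2 + 1) * (z ^ 3 + 4 * z ^ 2 + 3 * z + 2) * w ^ 2
               + (1 - z) * w ^ 4) / (z ^ 2 * w ^ 3 * (z + 1) ^ 5)).
  - cofactor ((z ^ 3 * (z - 1) + 2 * z * (z ^ 2 + 1) * w ^ 2 + (1 - z) * w ^ 4)
              / (z ^ 2 * w ^ 4 * (z + 1) ^ 5)).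
  - cofactor ((z ^ 3 * (1 - z ^ 3) - 2 * z * (z ^ 2 + 1) * (z ^ 2 + z + 1) * w ^ 2
               + (z ^ 3 - 1) * w ^ 4) / (z ^ 2 * w ^ 4 * (z + 1) ^ 5)).
Qed.

Lemma gpow_Lmat n : gpow mmul mone (Lmat z) n = mkMat2 (z ^ n) 0 0 ((/ z) ^ n).
Proof.
  induction n as [|n IH]; [reflexivity|].
  simpl gpow; rewrite IH; apply Mat2_eq; simpl; ring.
Qed.

Lemma m137_filling_rel_Lmat_Bmat n :
  meridian_entry z w * z ^ n = 1 -> m137_filling_rel eq mmul minv mone n (Lmat z) (Bmat z w).
Proof.
  intro filling; apply m137_filling_rel_iff; split; [exact relator1_Lmat_Bmat|].
  assert (det_mu : mdet (meridian mmul minv (Lmat z) (Bmat z w)) = 1).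
  { unfold meridian; rewrite !mdet_mmul, !mdet_minv, mdet_Lmat, mdet_Bmat by lra; ring. }
  destruct meridian_Lmat_Bmat as (mu11 & mu12 & mu21).
  rewrite gpow_Lmat; destruct (meridian mmul minv (Lmat z) (Bmat z w)) as [a b c d].
  unfold mdet in det_mu; simpl in *; subst.
  assert (d_eq : d = z ^ n) by (apply (Rmult_eq_reg_l (meridian_entry z w)); nra).
  unfold mone, mmul; apply Mat2_eq; simpl; try ring.
  - lra.
  - rewrite d_eq, <- Rpow_mult_distr, Rinv_r, pow1 by lra; ring.
Qed.

End OnTheCurve.

(** * Solving the filling equation *)

(* The positive root [q = w ^ 2] of [(z^3 - 1) q^2 + (z^2 + 1)^2 q - z (z^3 - 1) = 0],
   written without the removable singularity at [z = 1]. *)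
Definition curve_q (z : R) : R :=
  2 * z * (z ^ 3 - 1) / ((z ^ 2 + 1) ^ 2 + sqrt ((z ^ 2 + 1) ^ 4 + 4 * z * (z ^ 3 - 1) ^ 2)).

Definition curve_w (z : R) : R := sqrt (curve_q z).

Lemma curve_disc_pos z : 0 <= z -> 0 < (z ^ 2 + 1) ^ 4 + 4 * z * (z ^ 3 - 1) ^ 2.
Proof.
  intro z_ge0; pose proof (pow_lt (z ^ 2 + 1) 4 ltac:(nra)).
  pose proof (Rmult_le_pos (4 * z) _ ltac:(lra) (pow2_ge_0 (z ^ 3 - 1))); lra.
Qed.

Lemma curve_q_root z : 0 <= z ->
  (z ^ 3 - 1) * (curve_q z ^ 2 - z) + (z ^ 2 + 1) ^ 2 * curve_q z = 0.
Proof.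
  intro z_ge0; unfold curve_q.
  pose proof (sqrt_sqrt _ (Rlt_le _ _ (curve_disc_pos z z_ge0))) as S_sq.
  pose proof (sqrt_pos ((z ^ 2 + 1) ^ 4 + 4 * z * (z ^ 3 - 1) ^ 2)).
  set (S := sqrt _) in *; set (a := (z ^ 2 + 1) ^ 2); set (d := z ^ 3 - 1) in *.
  assert (a_pos : 0 < a) by (unfold a; apply pow_lt; nra).
  transitivity (z * d * (a ^ 2 + 4 * z * d ^ 2 - S * S) / (a + S) ^ 2).
  - field; lra.
  - rewrite S_sq; replace ((z ^ 2 + 1) ^ 4) with (a ^ 2) by (unfold a; ring).
    field; lra.
Qed.

Lemma curve_q_pos z : 1 < z -> 0 < curve_q z.
Proof.
  intro z_gt1; unfold curve_q.
  assert (1 < z ^ 3) by (simpl; nra).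
  apply Rdiv_lt_0_compat; [nra|].
  pose proof (sqrt_pos ((z ^ 2 + 1) ^ 4 + 4 * z * (z ^ 3 - 1) ^ 2)).
  pose proof (pow_lt (z ^ 2 + 1) 2); nra.
Qed.

Lemma curve_q_1 : curve_q 1 = 0.
Proof. unfold curve_q, Rdiv; ring. Qed.

Lemma curve_w_pos z : 1 < z -> 0 < curve_w z.
Proof. intro; apply sqrt_lt_R0, curve_q_pos; auto. Qed.

Lemma curve_w_on_curve z : 1 < z -> curve z (curve_w z) = 0.
Proof.
  intro z_gt1; unfold curve, curve_w.
  replace (sqrt (curve_q z) ^ 4) with ((sqrt (curve_q z) ^ 2) ^ 2) by ring.
  rewrite pow2_sqrt by (apply Rlt_le, curve_q_pos; auto).
  apply curve_q_root; lra.
Qed.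

Lemma continuous_curve_w z : 0 < z -> continuous curve_w z.
Proof.
  intro z_pos; unfold curve_w; apply continuous_sqrt_comp, (ex_derive_continuous curve_q).
  pose proof (curve_disc_pos z ltac:(lra)).
  pose proof (sqrt_pos ((z ^ 2 + 1) ^ 4 + 4 * z * (z ^ 3 - 1) ^ 2)).
  pose proof (pow_lt (z ^ 2 + 1) 2 ltac:(nra)).
  unfold curve_q; auto_derive; simpl in *; unfold Rminus in *; repeat split; lra.
Qed.

Definition filling_defect (n : nat) (z : R) : R := meridian_entry z (curve_w z) * z ^ n - 1.

Lemma continuous_filling_defect n z : 0 < z -> continuous (filling_defect n) z.
Proof.
  intro z_pos.
  set (A := fun z : R => (1 + z ^ 2 + z ^ 4) / z ^ 2 * z ^ n).
  set (B := fun z : R => (z - 1) * (z ^ 2 + 1) / z ^ 2 * z ^ n).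
  assert (cont_A : continuous A z)
    by (apply (ex_derive_continuous A); unfold A; auto_derive; nra).
  assert (cont_B : continuous B z)
    by (apply (ex_derive_continuous B); unfold B; auto_derive; nra).
  assert (defect_eq : forall z, filling_defect n z
            = curve_w z * (A z + B z * (curve_w z * curve_w z)) - 1)
    by (intro; unfold filling_defect, meridian_entry, A, B, Rdiv; ring).
  pose proof (continuous_curve_w z z_pos).
  apply (continuous_ext (fun z => curve_w z * (A z + B z * (curve_w z * curve_w z)) - 1));
    [intro; symmetry; apply defect_eq|].
  apply (continuous_minus (V := R_NormedModule)); [|apply continuous_const].
  apply (continuous_mult (K := R_AbsRing)); auto.
  apply (continuous_plus (V := R_NormedModule)); auto.
  do 2 (apply (continuous_mult (K := R_AbsRing)); auto).
Qed.

Lemma filling_defect_1 n : filling_defect n 1 = -1.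
Proof.
  unfold filling_defect, curve_w; rewrite curve_q_1, sqrt_0; unfold meridian_entry, Rdiv; ring.
Qed.

Lemma filling_defect_2_pos n : 0 < filling_defect n 2.
Proof.
  pose proof (curve_q_root 2 ltac:(lra)) as root; pose proof (curve_q_pos 2 ltac:(lra)).
  assert (q_gt : 1 / 4 < curve_q 2) by nra.
  pose proof (pow2_sqrt (curve_q 2) ltac:(lra)) as w_sq.
  pose proof (curve_w_pos 2 ltac:(lra)).
  unfold filling_defect, meridian_entry, curve_w in *; set (w := sqrt (curve_q 2)) in *.
  assert (1 <= 2 ^ n) by (apply pow_R1_Rle; lra).
  assert (1 / 2 < w) by nra.
  replace (w * (1 + 2 ^ 2 + 2 ^ 4 + (2 - 1) * (2 ^ 2 + 1) * w ^ 2) / 2 ^ 2)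
    with (w * (21 + 5 * w ^ 2) / 4) by field.
  assert (1 < w * (21 + 5 * w ^ 2) / 4) by nra.
  nra.
Qed.

Lemma exists_filling_parameter n : exists z, 1 < z /\ meridian_entry z (curve_w z) * z ^ n = 1.
Proof.
  destruct (Ranalysis5.IVT_interv (filling_defect n) 1 2) as (z & z_in & root).
  - intros a a_in; apply continuity_pt_filterlim, continuous_filling_defect; lra.
  - lra.
  - rewrite filling_defect_1; lra.
  - apply filling_defect_2_pos.
  - exists z; split.
    + destruct (Req_dec z 1) as [->|]; [rewrite filling_defect_1 in root|]; lra.
    + unfold filling_defect in root; lra.
Qed.

(** * Lifts of the action on the circle of rays *)

Definition lifts (A : Mat2) (f : R -> R) : Prop :=
  forall t, exists r, r > 0 /\
    m11 A * cos t + m12 A * sin t = r * cos (f t) /\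
    m21 A * cos t + m22 A * sin t = r * sin (f t).

Lemma cos2_sin2 x : cos x ^ 2 + sin x ^ 2 = 1.
Proof. rewrite <- (sin2_cos2 x); unfold Rsqr; ring. Qed.

Lemma lifts_mmul A B f g : lifts A f -> lifts B g -> lifts (mmul A B) (fun x => f (g x)).
Proof.
  intros lift_f lift_g t.
  destruct (lift_g t) as (r1 & r1_pos & eq1 & eq2).
  destruct (lift_f (g t)) as (r2 & r2_pos & eq3 & eq4).
  exists (r1 * r2); split; [apply Rmult_lt_0_compat; lra|].
  destruct A as [a11 a12 a21 a22], B as [b11 b12 b21 b22]; simpl in *; split.
  - transitivity (a11 * (b11 * cos t + b12 * sin t) + a12 * (b21 * cos t + b22 * sin t));
      [ring|].
    rewrite eq1, eq2; transitivity (r1 * (a11 * cos (g t) + a12 * sin (g t))); [ring|].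
    rewrite eq3; ring.
  - transitivity (a21 * (b11 * cos t + b12 * sin t) + a22 * (b21 * cos t + b22 * sin t));
      [ring|].
    rewrite eq1, eq2; transitivity (r1 * (a21 * cos (g t) + a22 * sin (g t))); [ring|].
    rewrite eq4; ring.
Qed.

Lemma lifts_mone_id : lifts mone (fun x => x).
Proof. intro t; exists 1; simpl; split; [lra | split; ring]. Qed.

Lemma lifts_same_ray A f g : lifts A f -> lifts A g ->
  forall t, cos (f t) = cos (g t) /\ sin (f t) = sin (g t).
Proof.
  intros lift_f lift_g t.
  destruct (lift_f t) as (r1 & r1_pos & eq1 & eq2).
  destruct (lift_g t) as (r2 & r2_pos & eq3 & eq4).
  assert (cos_eq : r1 * cos (f t) = r2 * cos (g t)) by congruence.
  assert (sin_eq : r1 * sin (f t) = r2 * sin (g t)) by congruence.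
  assert (r_eq : r1 ^ 2 = r2 ^ 2).
  { replace (r1 ^ 2) with ((r1 * cos (f t)) ^ 2 + (r1 * sin (f t)) ^ 2)
      by (rewrite 2!Rpow_mult_distr, <- Rmult_plus_distr_l, cos2_sin2; ring).
    rewrite cos_eq, sin_eq, 2!Rpow_mult_distr, <- Rmult_plus_distr_l, cos2_sin2; ring. }
  assert (r1 = r2) as <- by nra.
  split; apply (Rmult_eq_reg_l r1); lra.
Qed.

Lemma continuity_ident : continuity (fun x => x).
Proof. exact (derivable_continuous _ derivable_id). Qed.

Lemma continuity_translate c : continuity (fun x => x + c).
Proof.
  apply (continuity_plus (fun x => x) (fun _ => c));
    [exact continuity_ident | apply continuity_const; now intros ? ?].
Qed.

Definition shift (k : Z) (x : R) : R := x + IZR k * (2 * PI).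

Lemma shift_shift j k x : shift j (shift k x) = shift (k + j) x.
Proof. unfold shift; rewrite plus_IZR; ring. Qed.

Lemma shift_0 x : shift 0 x = x.
Proof. unfold shift; simpl; ring. Qed.

Lemma same_ray_shift a b : cos a = cos b -> sin a = sin b -> exists k, a = shift k b.
Proof.
  intros cos_eq sin_eq.
  assert (cos_diff : cos (a - b) = 1)
    by (rewrite cos_minus, cos_eq, sin_eq; pose proof (cos2_sin2 b); nra).
  assert (sin_half : sin ((a - b) / 2) = 0).
  { replace (a - b) with (2 * ((a - b) / 2)) in cos_diff by field.
    rewrite cos_2a_sin in cos_diff; nra. }
  destruct (sin_eq_0_0 _ sin_half) as [k Hk]; exists k; unfold shift; lra.
Qed.

Lemma periodic_shift (g : R -> R) : (forall x, g (x + 2 * PI) = g x) ->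
  forall k x, g (shift k x) = g x.
Proof.
  intros periodic.
  assert (nat_shift : forall m x, g (x + INR m * (2 * PI)) = g x).
  { induction m as [|m IH]; intro x.
    - simpl; f_equal; ring.
    - rewrite S_INR.
      replace (x + (INR m + 1) * (2 * PI)) with (x + INR m * (2 * PI) + 2 * PI) by ring.
      rewrite periodic; apply IH. }
  intros k x; unfold shift; destruct (Z_le_gt_dec 0 k) as [k_ge0|k_lt0].
  - rewrite <- (Z2Nat.id k k_ge0), <- INR_IZR_INZ; apply nat_shift.
  - rewrite <- (nat_shift (Z.to_nat (- k)) (x + IZR k * (2 * PI))).
    rewrite INR_IZR_INZ, Z2Nat.id, opp_IZR by lia; f_equal; ring.
Qed.

Lemma cos_plus_2PI x : cos (x + 2 * PI) = cos x.
Proof. rewrite cos_plus, cos_2PI, sin_2PI; ring. Qed.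

Lemma sin_plus_2PI x : sin (x + 2 * PI) = sin x.
Proof. rewrite sin_plus, cos_2PI, sin_2PI; ring. Qed.

Lemma lifts_shift k : lifts mone (shift k).
Proof.
  intro t; exists 1; simpl; split; [lra|].
  rewrite (periodic_shift cos cos_plus_2PI), (periodic_shift sin sin_plus_2PI); split; ring.
Qed.

(* A jump between two multiples of [2 PI] would pass through an odd multiple of [PI]. *)
Lemma continuous_2PIZ_no_jump (d : R -> R) x y k0 k1 : continuity d ->
  (forall x, exists k, d x = IZR k * (2 * PI)) ->
  d x = IZR k0 * (2 * PI) -> d y = IZR k1 * (2 * PI) -> (k0 < k1)%Z -> False.
Proof.
  intros d_cont d_2PIZ dx dy k0_lt.
  pose proof PI_RGT_0.
  assert (IZR k0 + 1 <= IZR k1) by (rewrite <- plus_IZR; apply IZR_le; lia).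
  destruct (IVT_gen d x y ((IZR k0 + / 2) * (2 * PI)) d_cont) as (t & _ & dt).
  { rewrite dx, dy; split.
    - apply Rle_trans with (IZR k0 * (2 * PI)); [apply Rmin_l | nra].
    - apply Rle_trans with (IZR k1 * (2 * PI)); [nra | apply Rmax_r]. }
  destruct (d_2PIZ t) as [k dt']; rewrite dt in dt'.
  assert (IZR (2 * (k - k0)) = 1) as parity.
  { rewrite mult_IZR, minus_IZR.
    apply (Rmult_eq_reg_r (2 * PI)) in dt'; simpl; lra. }
  apply eq_IZR in parity; lia.
Qed.

Lemma continuous_2PIZ_const (d : R -> R) : continuity d ->
  (forall x, exists k, d x = IZR k * (2 * PI)) -> forall x, d x = d 0.
Proof.
  intros d_cont d_2PIZ x.
  destruct (d_2PIZ 0) as [k0 d0], (d_2PIZ x) as [k1 d1].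
  destruct (Z.lt_total k0 k1) as [lt | [-> | gt]].
  - destruct (continuous_2PIZ_no_jump d 0 x k0 k1 d_cont d_2PIZ d0 d1 lt).
  - congruence.
  - destruct (continuous_2PIZ_no_jump d x 0 k1 k0 d_cont d_2PIZ d1 d0 gt).
Qed.

Lemma lifts_unique_up_to_shift A f g : continuity f -> continuity g ->
  lifts A f -> lifts A g -> exists k, forall x, f x = shift k (g x).
Proof.
  intros f_cont g_cont lift_f lift_g.
  set (d := fun x => f x - g x).
  assert (d_2PIZ : forall x, exists k, d x = IZR k * (2 * PI)).
  { intro x; destruct (lifts_same_ray A f g lift_f lift_g x) as [cos_eq sin_eq].
    destruct (same_ray_shift _ _ cos_eq sin_eq) as [k fx]; exists k.
    unfold d, shift in *; lra. }
  destruct (d_2PIZ 0) as [k d0]; exists k; intro x.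
  rewrite <- (continuous_2PIZ_const d (continuity_minus f g f_cont g_cont) d_2PIZ x) in d0.
  unfold d, shift in *; lra.
Qed.

Definition equivariant (f : R -> R) : Prop := forall x, f (x + 2 * PI) = f x + 2 * PI.

Lemma equivariant_shift f : equivariant f -> forall k x, f (shift k x) = shift k (f x).
Proof.
  intros f_eqv k x.
  pose proof (periodic_shift (fun y => f y - y)) as displacement.
  assert (fx : f (shift k x) - shift k x = f x - x)
    by (apply displacement; intro y; rewrite f_eqv; ring).
  unfold shift in *; lra.
Qed.

Definition Rot (th : R) : Mat2 := mkMat2 (cos th) (- sin th) (sin th) (cos th).

Lemma lifts_Rot th : lifts (Rot th) (fun t => t + th).
Proof. intro t; exists 1; simpl; rewrite cos_plus, sin_plus; split; [lra | split; ring]. Qed.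

Lemma lifts_minv_Rot th : lifts (minv (Rot th)) (fun t => t - th).
Proof. intro t; exists 1; simpl; rewrite cos_minus, sin_minus; split; [lra | split; ring]. Qed.

Lemma unit_vector_angle x y : x ^ 2 + y ^ 2 = 1 -> exists th, cos th = x /\ sin th = y.
Proof.
  intro unit.
  assert (x_bound : -1 <= x <= 1) by nra.
  assert (sqrt_eq : sqrt (1 - x²) = Rabs y)
    by (rewrite <- sqrt_Rsqr_abs; f_equal; unfold Rsqr; lra).
  destruct (Rle_dec 0 y) as [y_ge0 | y_lt0].
  - exists (acos x); rewrite cos_acos, sin_acos, sqrt_eq, Rabs_pos_eq by auto; auto.
  - exists (- acos x); rewrite cos_neg, sin_neg, cos_acos, sin_acos, sqrt_eq, Rabs_left
      by (auto || lra); split; [auto | ring].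
Qed.

(* [th] is the argument of [(a11 + a22, a21 - a12)]: this makes [Rot (- th) A] symmetric,
   with trace the length of that vector. *)
Lemma SL2_polar A : mdet A = 1 -> exists th a b d,
  0 < a /\ a * d - b * b = 1 /\ A = mmul (Rot th) (mkMat2 a b b d).
Proof.
  destruct A as [a11 a12 a21 a22]; unfold mdet; simpl; intro det.
  set (x := a11 + a22); set (y := a21 - a12).
  assert (norm_pos : 0 < x ^ 2 + y ^ 2).
  { destruct (Req_dec x 0) as [x0 | x_neq0]; [|pose proof (pow2_gt_0 x x_neq0); nra].
    assert (y <> 0) by (unfold x, y in *; intro; nra).
    pose proof (pow2_gt_0 y); nra. }
  set (rho := sqrt (x ^ 2 + y ^ 2)).
  assert (rho_pos : 0 < rho) by (apply sqrt_lt_R0; lra).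
  assert (rho_sq : rho ^ 2 = x ^ 2 + y ^ 2) by (apply pow2_sqrt; lra).
  destruct (unit_vector_angle (x / rho) (y / rho)) as (th & cos_th & sin_th).
  { replace ((x / rho) ^ 2 + (y / rho) ^ 2) with ((x ^ 2 + y ^ 2) / rho ^ 2) by (field; lra).
    rewrite rho_sq; field; lra. }
  pose proof (cos2_sin2 th) as unit_th.
  set (c := cos th) in *; set (s := sin th) in *.
  assert (sym : c * a12 + s * a22 = - s * a11 + c * a21)
    by (rewrite cos_th, sin_th; unfold x, y; field; lra).
  assert (trace : (c * a11 + s * a21) + (- s * a12 + c * a22) = rho).
  { rewrite cos_th, sin_th.
    transitivity ((x ^ 2 + y ^ 2) / rho); [unfold x, y; field; lra|].
    rewrite <- rho_sq; field; lra. }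
  assert (det_sym : (c * a11 + s * a21) * (- s * a12 + c * a22)
                    - (c * a12 + s * a22) * (c * a12 + s * a22) = 1).
  { rewrite sym at 2.
    transitivity ((c ^ 2 + s ^ 2) * (a11 * a22 - a12 * a21)); [ring | rewrite unit_th; lra]. }
  exists th, (c * a11 + s * a21), (c * a12 + s * a22), (- s * a12 + c * a22).
  split; [nra | split; [lra|]].
  unfold Rot, mmul; simpl; fold c s; apply Mat2_eq.
  - transitivity ((c ^ 2 + s ^ 2) * a11); [rewrite unit_th; ring | rewrite sym; ring].
  - transitivity ((c ^ 2 + s ^ 2) * a12); [rewrite unit_th; ring | ring].
  - transitivity ((c ^ 2 + s ^ 2) * a21); [rewrite unit_th; ring | rewrite sym; ring].
  - transitivity ((c ^ 2 + s ^ 2) * a22); [rewrite unit_th; ring | ring].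
Qed.

(* For [S = [[a, b], [b, d]]] positive definite, [S e_t] has the components [quad_form]
   along [e_t = (cos t, sin t)] and [skew_form] along [e_t] turned by [PI / 2]; its
   direction is therefore [t + atan (skew_form / quad_form)], within [PI / 2] of [t]. *)
Definition quad_form (a b d t : R) : R := a * cos t ^ 2 + 2 * b * cos t * sin t + d * sin t ^ 2.
Definition skew_form (a b d t : R) : R := b * cos t ^ 2 + (d - a) * cos t * sin t - b * sin t ^ 2.
Definition spd_lift (a b d t : R) : R := t + atan (skew_form a b d t / quad_form a b d t).

Section PositiveDefinite.

Variables a b d : R.
Hypotheses (a_pos : 0 < a) (det : a * d - b * b = 1).

Lemma quad_form_pos t : 0 < quad_form a b d t.
Proof.
  unfold quad_form; pose proof (cos2_sin2 t) as unit.
  assert (a * (a * cos t ^ 2 + 2 * b * cos t * sin t + d * sin t ^ 2)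
          = (a * cos t + b * sin t) ^ 2 + sin t ^ 2) as completed
    by (rewrite <- (Rmult_1_l (sin t ^ 2)) at 2; rewrite <- det; ring).
  assert (0 < (a * cos t + b * sin t) ^ 2 + sin t ^ 2).
  { destruct (Req_dec (sin t) 0) as [s0 | s_neq0].
    - rewrite s0 in *.
      replace ((a * cos t + b * 0) ^ 2 + 0 ^ 2) with (a ^ 2 * cos t ^ 2) by ring.
      replace (cos t ^ 2) with 1 by (simpl in unit; lra); nra.
    - pose proof (pow2_gt_0 _ s_neq0); pose proof (pow2_ge_0 (a * cos t + b * sin t)); lra. }
  nra.
Qed.

Lemma lifts_spd_lift : lifts (mkMat2 a b b d) (spd_lift a b d).
Proof.
  intro t; pose proof (quad_form_pos t) as Q_pos.
  set (u := skew_form a b d t / quad_form a b d t).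
  assert (0 < sqrt (1 + u ^ 2)) by (apply sqrt_lt_R0; pose proof (pow2_ge_0 u); lra).
  exists (quad_form a b d t * sqrt (1 + u ^ 2)); split; [apply Rmult_lt_0_compat; lra|].
  unfold spd_lift; fold u; rewrite cos_plus, sin_plus, cos_atan, sin_atan.
  cbn [m11 m12 m21 m22].
  replace (1 + u²) with (1 + u ^ 2) by (unfold Rsqr; ring).
  pose proof (cos2_sin2 t) as unit; unfold u, skew_form, quad_form in *; split.
  - transitivity ((a * cos t + b * sin t) * (cos t ^ 2 + sin t ^ 2)); [rewrite unit; ring|].
    field; lra.
  - transitivity ((b * cos t + d * sin t) * (cos t ^ 2 + sin t ^ 2)); [rewrite unit; ring|].
    field; lra.
Qed.

Lemma continuity_spd_lift : continuity (spd_lift a b d).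
Proof.
  intro t; apply continuity_pt_filterlim, (ex_derive_continuous (spd_lift a b d)).
  pose proof (quad_form_pos t); unfold spd_lift, skew_form, quad_form in *.
  auto_derive; lra.
Qed.

Lemma equivariant_spd_lift : equivariant (spd_lift a b d).
Proof.
  intro t; unfold spd_lift, skew_form, quad_form.
  rewrite cos_plus_2PI, sin_plus_2PI; ring.
Qed.

End PositiveDefinite.

(* Both corrections [atan _] lie in [(- PI / 2, PI / 2)], so the composite differs from
   the identity by a multiple of [2 PI] of absolute value less than [PI]. *)
Lemma spd_lift_inverse a b d t : 0 < a -> a * d - b * b = 1 ->
  spd_lift d (- b) a (spd_lift a b d t) = t.
Proof.
  intros a_pos det; assert (d_pos : 0 < d) by nra.
  assert (inverse : mmul (mkMat2 d (- b) (- b) a) (mkMat2 a b b d) = mone)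
    by (apply Mat2_eq; simpl; lra).
  pose proof (lifts_mmul _ _ _ _ (lifts_spd_lift d (- b) a d_pos ltac:(lra))
                (lifts_spd_lift a b d a_pos det)) as lift_comp.
  rewrite inverse in lift_comp.
  destruct (lifts_same_ray _ _ _ lift_comp lifts_mone_id t) as [cos_eq sin_eq].
  destruct (same_ray_shift _ _ cos_eq sin_eq) as [k comp_eq]; rewrite comp_eq.
  assert (bound : - PI < shift k t - t < PI).
  { rewrite <- comp_eq; unfold spd_lift at 1 2.
    pose proof (atan_bound (skew_form a b d t / quad_form a b d t)).
    pose proof (atan_bound (skew_form d (- b) a (spd_lift a b d t)
                            / quad_form d (- b) a (spd_lift a b d t))).
    unfold spd_lift in *; lra. }
  unfold shift in *; pose proof PI_RGT_0.
  assert (k = 0%Z) as ->.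
  { assert (-1 / 2 < IZR k < 1 / 2) by (split; apply (Rmult_lt_reg_r (2 * PI)); lra).
    assert (-1 < k < 1)%Z by (split; apply lt_IZR; simpl; lra); lia. }
  simpl; ring.
Qed.

(** * Lifting representations *)

Record represents (p : Lift) (A : Mat2) : Prop := {
  represents_lifts : lifts A (fst p);
  represents_lifts_inv : lifts (minv A) (snd p);
  represents_cont : continuity (fst p);
  represents_cont_inv : continuity (snd p);
  represents_equiv : equivariant (fst p);
  represents_equiv_inv : equivariant (snd p);
  represents_inv_r : forall x, fst p (snd p x) = x;
  represents_inv_l : forall x, snd p (fst p x) = x }.

Lemma represents_mul p q A B :
  represents p A -> represents q B -> represents (lift_mul p q) (mmul A B).
Proof.
  intros [] []; split; simpl.
  - apply lifts_mmul; auto.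
  - rewrite minv_mmul; apply lifts_mmul; auto.
  - apply continuity_comp; auto.
  - apply continuity_comp; auto.
  - intro x; congruence.
  - intro x; congruence.
  - intro x; congruence.
  - intro x; congruence.
Qed.

Lemma represents_inv p A : represents p A -> represents (lift_inv p) (minv A).
Proof. intros []; split; simpl; rewrite ?minv_minv; auto. Qed.

Lemma represents_one : represents lift_one mone.
Proof.
  split; cbn [fst snd lift_one]; rewrite ?minv_mone; try (intro; reflexivity).
  all: first [exact lifts_mone_id | exact continuity_ident].
Qed.

Lemma represents_gpow p A n :
  represents p A -> represents (gpow lift_mul lift_one p n) (gpow mmul mone A n).
Proof.
  intro rep; induction n; simpl; [apply represents_one | apply represents_mul; auto].
Qed.

Lemma represents_exists A : mdet A = 1 -> exists p, represents p A.
Proof.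
  intro det; destruct (SL2_polar A det) as (th & a & b & d & a_pos & det_S & ->).
  assert (d_pos : 0 < d) by nra.
  assert (det_S' : d * a - - b * - b = 1) by lra.
  exists (fun t => spd_lift a b d t + th, fun t => spd_lift d (- b) a (t - th)); split; simpl.
  - apply (lifts_mmul _ _ (fun t => t + th)); [apply lifts_Rot | apply lifts_spd_lift; auto].
  - rewrite minv_mmul; apply (lifts_mmul _ _ _ (fun t => t - th));
      [apply lifts_spd_lift; auto | apply lifts_minv_Rot].
  - apply (continuity_comp (spd_lift a b d) (fun t => t + th));
      [apply continuity_spd_lift; auto | apply continuity_translate].
  - apply (continuity_comp (fun t => t - th)); [apply continuity_translate|].
    apply continuity_spd_lift; auto.
  - intro x; rewrite equivariant_spd_lift; ring.
  - intro x; replace (x + 2 * PI - th) with (x - th + 2 * PI) by ring.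
    apply equivariant_spd_lift.
  - intro x; pose proof (spd_lift_inverse d (- b) a (x - th) d_pos det_S') as inverse.
    rewrite Ropp_involutive in inverse; rewrite inverse; ring.
  - intro x; replace (spd_lift a b d x + th - th) with (spd_lift a b d x) by ring.
    apply spd_lift_inverse; auto.
Qed.

Lemma is_lift_elt_represents p A : mdet A = 1 -> represents p A -> is_lift_elt p.
Proof.
  intros det rep; split; [split|split]; try apply rep.
  destruct A as [a11 a12 a21 a22]; exists a11, a12, a21, a22; split; [exact det|].
  apply rep.
Qed.

Definition lift_shift (k : Z) (p : Lift) : Lift :=
  (fun x => fst p (shift k x), fun x => shift (- k) (snd p x)).

Lemma represents_lift_shift k p A : represents p A -> represents (lift_shift k p) A.
Proof.
  intros [lift lift_inv cont cont_inv eqv eqv_inv inv_r inv_l]; split; simpl.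
  - rewrite <- (mmul_mone_r A); exact (lifts_mmul _ _ _ _ lift (lifts_shift k)).
  - rewrite <- (mmul_mone_l (minv A)); exact (lifts_mmul _ _ _ _ (lifts_shift (- k)) lift_inv).
  - apply (continuity_comp (shift k)); auto; apply continuity_translate.
  - apply (continuity_comp (snd p) (shift (- k))); auto; apply continuity_translate.
  - intro x; replace (shift k (x + 2 * PI)) with (shift k x + 2 * PI) by (unfold shift; ring).
    apply eqv.
  - intro x; unfold shift; rewrite eqv_inv; ring.
  - intro x; rewrite shift_shift, Z.add_opp_diag_l, shift_0; apply inv_r.
  - intro x; rewrite (equivariant_shift _ eqv), (equivariant_shift _ eqv_inv), inv_l.
    rewrite shift_shift, Z.add_opp_diag_r; apply shift_0.
Qed.

Lemma represents_unique_up_to_shift p q A : represents p A -> represents q A ->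
  exists k, forall x, fst p x = shift k (fst q x).
Proof. intros [] []; apply (lifts_unique_up_to_shift A); auto. Qed.

Section ShiftedGenerators.

Variables (p q : Lift) (L B : Mat2).
Hypotheses (rep_p : represents p L) (rep_q : represents q B).

Ltac pull_shifts :=
  repeat first
    [ rewrite (equivariant_shift _ (represents_equiv _ _ rep_p))
    | rewrite (equivariant_shift _ (represents_equiv_inv _ _ rep_p))
    | rewrite (equivariant_shift _ (represents_equiv _ _ rep_q))
    | rewrite (equivariant_shift _ (represents_equiv_inv _ _ rep_q))
    | rewrite shift_shift ].

Lemma gpow_lift_shift a n x :
  fst (gpow lift_mul lift_one (lift_shift a p) n) x
  = shift (Z.of_nat n * a) (fst (gpow lift_mul lift_one p n) x).
Proof.
  induction n as [|n IH]; [simpl; rewrite shift_0; reflexivity|].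
  cbn [gpow lift_mul lift_shift fst]; rewrite IH; pull_shifts; f_equal; lia.
Qed.

Lemma relator1_lhs_lift_shift a c x :
  fst (relator1_lhs lift_mul lift_inv (lift_shift a p) (lift_shift c q)) x
  = shift (- a) (fst (relator1_lhs lift_mul lift_inv p q) x).
Proof. simpl; pull_shifts; f_equal; lia. Qed.

Lemma relator1_rhs_lift_shift a c x :
  fst (relator1_rhs lift_mul lift_inv (lift_shift a p) (lift_shift c q)) x
  = fst (relator1_rhs lift_mul lift_inv p q) x.
Proof. simpl; pull_shifts; rewrite <- (shift_0 (fst p _)) at 2; f_equal; lia. Qed.

Lemma filling_word_lift_shift a c n x :
  fst (lift_mul (meridian lift_mul lift_inv (lift_shift a p) (lift_shift c q))
                (gpow lift_mul lift_one (lift_shift a p) n)) x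
  = shift ((Z.of_nat n - 2) * a + c)
      (fst (lift_mul (meridian lift_mul lift_inv p q) (gpow lift_mul lift_one p n)) x).
Proof.
  cbn [meridian lift_mul lift_inv lift_shift fst snd]; rewrite gpow_lift_shift.
  pull_shifts; f_equal; lia.
Qed.

End ShiftedGenerators.

(* Both relators map to central elements [shift k] of the lifted group; since the
   exponent sums of [(lambda, beta)] in the two relators are [(-1, 0)] and [(n - 2, 1)],
   a unimodular system, shifting the lifts of the generators kills both. *)
Lemma lift_m137_filling_rel L B n : mdet L = 1 -> mdet B = 1 ->
  m137_filling_rel eq mmul minv mone n L B ->
  exists l b, represents l L /\ represents b B /\
    m137_filling_rel lift_eq lift_mul lift_inv lift_one n l b.
Proof.
  intros det_L det_B [rel1 rel2].
  change (relator1_lhs mmul minv L B = relator1_rhs mmul minv L B) in rel1.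
  change (mmul (meridian mmul minv L B) (gpow mmul mone L n) = mone) in rel2.
  destruct (represents_exists L det_L) as [p rep_p].
  destruct (represents_exists B det_B) as [q rep_q].
  assert (rep_lhs : represents (relator1_lhs lift_mul lift_inv p q) (relator1_rhs mmul minv L B)).
  { rewrite <- rel1; unfold relator1_lhs.
    repeat (apply represents_mul || apply represents_inv); auto. }
  assert (rep_rhs : represents (relator1_rhs lift_mul lift_inv p q) (relator1_rhs mmul minv L B)).
  { unfold relator1_rhs; repeat (apply represents_mul || apply represents_inv); auto. }
  assert (rep_filling : represents (lift_mul (meridian lift_mul lift_inv p q)
                                             (gpow lift_mul lift_one p n)) mone).
  { rewrite <- rel2; unfold meridian.
    repeat (apply represents_mul || apply represents_inv || apply represents_gpow); auto. }
  destruct (represents_unique_up_to_shift _ _ _ rep_lhs rep_rhs) as [k1 shift1].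
  destruct (represents_unique_up_to_shift _ _ _ rep_filling represents_one) as [k2 shift2].
  exists (lift_shift k1 p), (lift_shift (- k2 - (Z.of_nat n - 2) * k1) q).
  split; [|split]; try (apply represents_lift_shift; auto).
  apply m137_filling_rel_iff; split; intro x.
  - rewrite (relator1_lhs_lift_shift p q L B), (relator1_rhs_lift_shift p q L B), shift1,
      shift_shift, Z.add_opp_diag_r by auto.
    apply shift_0.
  - rewrite (filling_word_lift_shift p q L B), shift2, shift_shift by auto.
    simpl; rewrite <- (shift_0 x) at 2; f_equal; lia.
Qed.

Lemma diag_lift_fixing_PI4 a d f :
  lifts (mkMat2 a 0 0 d) f -> f (PI / 4) = PI / 4 -> a = d.
Proof.
  intros lift fixed; destruct (lift (PI / 4)) as (r & _ & eq1 & eq2).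
  rewrite fixed, cos_PI4, sin_PI4 in *; simpl in *.
  assert (0 < 1 / sqrt 2) by (apply Rdiv_lt_0_compat; [lra | apply sqrt_lt_R0; lra]).
  apply (Rmult_eq_reg_r (1 / sqrt 2)); nra.
Qed.

Theorem mainTheorem6 : forall n : nat, (0 < n)%nat ->
  (exists L B : Mat2,
      in_SL2R L /\ in_SL2R B /\
      m137_filling_rel eq mmul minv mone n L B /\
      (L <> mone \/ B <> mone))
  /\
  (exists l b : Lift,
      is_lift_elt l /\ is_lift_elt b /\
      m137_filling_rel lift_eq lift_mul lift_inv lift_one n l b /\
      (~ lift_eq l lift_one \/ ~ lift_eq b lift_one)).
Proof.
  intros n _.
  destruct (exists_filling_parameter n) as (z & z_gt1 & filling).
  pose proof (curve_w_pos z z_gt1); pose proof (curve_w_on_curve z z_gt1).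
  set (w := curve_w z) in *.
  assert (det_L : mdet (Lmat z) = 1) by (apply mdet_Lmat; lra).
  assert (det_B : mdet (Bmat z w) = 1) by (apply mdet_Bmat; lra).
  assert (rel : m137_filling_rel eq mmul minv mone n (Lmat z) (Bmat z w))
    by (apply m137_filling_rel_Lmat_Bmat; auto).
  assert (L_not_scalar : z <> / z).
  { intro z_inv; assert (z * z = 1) by (rewrite z_inv at 2; field; lra); nra. }
  split.
  - exists (Lmat z), (Bmat z w); refine (conj det_L (conj det_B (conj rel (or_introl _)))).
    intro L_one; injection L_one; lra.
  - destruct (lift_m137_filling_rel _ _ n det_L det_B rel) as (l & b & rep_l & rep_b & rel_lift).
    exists l, b; refine (conj (is_lift_elt_represents l _ det_L rep_l)
                    (conj (is_lift_elt_represents b _ det_B rep_b) (conj rel_lift (or_introl _)))).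
    intro l_one; apply L_not_scalar.
    apply (diag_lift_fixing_PI4 _ _ (fst l)); [apply rep_l | apply l_one].
Qed.
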